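(* Let $a,b,n$ be positive integers and $h(j)=aj^n+b$ for $j\ge0$, $h(j)=0$ for $j<0$. Then $\beta_d^d(h)>0$ for every integer $d\ge 1$.
   Context: For a function $h:\mathbb Z\to\mathbb Z_{\ge0}$ vanishing for all sufficiently negative arguments and integers $k\le d$, $\beta_k^d(h)=\sum_{j\le k}(-1)^{k-j}\binom{d-j}{k-j}h(j)$. *)

From mathcomp Require Import all_boot all_order all_algebra.
Set Implicit Arguments. Unset Strict Implicit. Unset Printing Implicit Defensive.
Import Order.TTheory GRing.Theory Num.Theory.
Local Open Scope ring_scope.

(* beta_k^d(h) = \sum_{j <= k} (-1)^(k-j) C(d-j, k-j) h(j), for h : Z -> Z
   vanishing below [lo] (so the sum over j <= k reduces to lo <= j <= k).
   We index by i = k - j, i = 0 .. k - lo: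
     (-1)^(k-j) = (-1)^i,  C(d-j, k-j) = C((d-k) + i, i).
   [lo] is any integer with h j = 0 for all j < lo and lo <= k; the value
   does not depend on this choice. *)
Definition beta (h : int -> int) (lo : int) (k d : int) : int :=
  \sum_(0 <= i < `|k - lo|%N.+1)
     (-1) ^+ i * ('C(`|d - k|%N + i, i))%:Z * h (k - i%:Z).

From mathcomp Require Import all_boot all_order all_algebra.
Import Order.TTheory GRing.Theory Num.Theory.
Local Open Scope ring_scope.

(* On the diagonal k = d every binomial coefficient C(d-j, d-j) equals 1, so
   beta_d^d(h) is the alternating sum  h(d) - h(d-1) + h(d-2) - ... , which
   stops at j = 0 when h vanishes on negative arguments.  Calling this sum
   alt_sum h d, it satisfies  alt_sum h (m+1) = h(m+1) - alt_sum h m.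
   If h is positive at 0 and strictly increasing on the naturals, induction
   on this recursion gives the invariant  0 < alt_sum h m <= h(m) : indeed
   h(m+1) - alt_sum h m >= h(m+1) - h(m) > 0.  The file proves
   (1) the recursion, (2) the invariant, (3) the identification of the
   diagonal beta with alt_sum, and (4) that j |-> a j^n + b is strictly
   increasing; the theorem then combines these four facts. *)

Section AlternatingSum.

Variable h : int -> int.

Definition alt_sum (m : nat) : int :=
  \sum_(0 <= i < m.+1) (-1) ^+ i * h (m%:Z - i%:Z).

Lemma alt_sumS (m : nat) : alt_sum m.+1 = h (m.+1)%:Z - alt_sum m.
Proof.
rewrite /alt_sum big_nat_recl // expr0 mul1r subr0; congr (_ + _).
rewrite -sumrN; apply: eq_bigr => i _.
rewrite exprS mulN1r mulNr; congr (- (_ * h _)).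
by rewrite -[(m.+1)%N]addn1 -[(i.+1)%N]addn1 !PoszD opprD addrACA subrr addr0.
Qed.

Lemma alt_sum_bounds :
    0 < h 0 -> (forall m : nat, h m%:Z < h (m.+1)%:Z) ->
  forall m : nat, 0 < alt_sum m <= h m%:Z.
Proof.
move=> h0_gt0 h_incr; elim=> [|m /andP[sum_gt0 sum_le]].
  by rewrite /alt_sum big_nat1 expr0 mul1r subr0 h0_gt0 lexx.
rewrite alt_sumS subr_gt0 lerBlDr lerDl (ltW sum_gt0) andbT.
exact: le_lt_trans sum_le (h_incr m).
Qed.

(* On the diagonal, beta reduces to the alternating sum once h vanishes on
   negative arguments: the extra terms indexed beyond m see only h(j), j < 0. *)
Lemma beta_diag_alt_sum (lo : int) (m : nat) :
    (forall j : int, j < 0 -> h j = 0) -> lo <= 0 ->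
  beta h lo m m = alt_sum m.
Proof.
move=> h_neg lo_le0; rewrite /beta subrr /= /alt_sum.
have range_le : (m.+1 <= `|m%:Z - lo|.+1)%N.
  rewrite ltnS -lez_nat gez0_abs; last by rewrite subr_ge0 (le_trans lo_le0).
  by rewrite lerDl oppr_ge0.
rewrite (@big_cat_nat _ _ _ m.+1 0 _ _ _ (leq0n _) range_le) /= [X in _ + X]big_nat_cond.
rewrite [X in _ + X]big1 ?addr0; first by apply: eq_bigr => i _; rewrite binn mulr1.
move=> i /andP[/andP[m_lt_i _] _].
by rewrite h_neg ?mulr0 // subr_lt0 ltz_nat.
Qed.

End AlternatingSum.

Lemma scaled_power_incr (a b n m : nat) :
  (0 < a)%N -> (0 < n)%N -> (a * m ^ n + b < a * m.+1 ^ n + b)%N.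
Proof. by move=> a_gt0 n_gt0; rewrite ltn_add2r ltn_pmul2l // ltn_exp2r. Qed.

Theorem lemma3p2 (a b n : nat) (ha : (0 < a)%N) (hb : (0 < b)%N) (hn : (0 < n)%N)
  (h : int -> int)
  (hpos : forall j : int, 0 <= j -> h j = a%:Z * j ^+ n + b%:Z)
  (hneg : forall j : int, j < 0 -> h j = 0)
  (d : int) (hd : 1 <= d) (lo : int) (hlo : lo <= 0) :
  0 < beta h lo d d.
Proof.
have h_nat (m : nat) : h m%:Z = (a * m ^ n + b)%N%:Z.
  by rewrite hpos // PoszD PoszM -!natz natrX.
case: d hd => [m|//] _.
rewrite beta_diag_alt_sum //.
have h0_gt0 : 0 < h 0 by rewrite (h_nat 0%N) ltz_nat addn_gt0 hb orbT.
have h_incr (k : nat) : h k%:Z < h k.+1%:Z.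
  by rewrite !h_nat ltz_nat scaled_power_incr.
by have /andP[] := @alt_sum_bounds h h0_gt0 h_incr m.
Qed.
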